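(* Every matching of $X_{2k}$ of size $k\ge 4$ contains two separated pairs that have no edge in common.
   Context: Let $k\ge 1$ and let $X_{2k}=\{P_1,\dots,P_{2k}\}$ be $2k$ points in convex position in the plane, labeled in clockwise cyclic order; indices are taken modulo $2k$. A matching of $X_{2k}$ means a set of $k$ pairwise non-crossing straight segments (edges) with endpoints in $X_{2k}$ covering every point exactly once; its size is $k$. A block of a matching $M$ is a pair of edges $\{P_iP_{i+3},P_{i+1}P_{i+2}\}\subseteq M$; an antiblock is a pair of edges $\{P_iP_{i+1},P_{i+2}P_{i+3}\}\subseteq M$; a separated pair is a block or an antiblock. *)

From mathcomp Require Import all_boot.
Set Implicit Arguments. Unset Strict Implicit. Unset Printing Implicit Defensive.

(* Points P_1..P_{2k} in convex position, clockwise, are modelled by the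
   ordinals 'I_n (n = 2k) in cyclic order.  Index arithmetic is mod n. *)

(* cyc i j = the point with index i + j (mod n). The default of insubd is
   never used since (i + j) %% n < n whenever 'I_n is inhabited. *)
Definition cyc n (i : 'I_n) (j : nat) : 'I_n := insubd i ((i + j) %% n).

Definition edge n (a b : 'I_n) : {set 'I_n} := [set a; b].

(* Two segments with endpoints in convex position cross iff their endpoints
   strictly interleave in the cyclic order. *)
Definition crossing n (e f : {set 'I_n}) : Prop :=
  exists a b c d : 'I_n,
    e = edge a b /\ f = edge c d /\ (a < c)%N /\ (c < b)%N /\ (b < d)%N.

Definition is_matching n (M : {set {set 'I_n}}) : Prop :=
  [/\ (forall e, e \in M -> #|e| = 2),
      (forall x : 'I_n, exists! e, e \in M /\ x \in e)
    & (forall e f, e \in M -> f \in M -> ~ crossing e f)].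

Definition is_block n (M : {set {set 'I_n}}) (S : {set {set 'I_n}}) : Prop :=
  exists i : 'I_n,
    S = [set edge i (cyc i 3); edge (cyc i 1) (cyc i 2)] /\ S \subset M.

Definition is_antiblock n (M : {set {set 'I_n}}) (S : {set {set 'I_n}}) : Prop :=
  exists i : 'I_n,
    S = [set edge i (cyc i 1); edge (cyc i 2) (cyc i 3)] /\ S \subset M.

Definition is_separated_pair n (M S : {set {set 'I_n}}) : Prop :=
  is_block M S \/ is_antiblock M S.

(* Represent the matching by its partner involution p on the indices, read
   linearly from some starting point.  In an interval [x, y) stable under p,
   look at the partner of x: either the chord (x, p x) encloses a shorter
   stable interval, or it is short and, together with the next chord, forms
   a block or an antiblock.  Hence every stable interval of length at least 3
   contains a separated pair.  Now start reading the cycle at a first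
   separated pair: its four points form the stable interval [0, 4), so the
   remaining 2k - 4 >= 4 points form the stable interval [4, 2k), which
   contains a second separated pair, vertex-disjoint from the first. *)
From mathcomp Require Import all_boot zify.
Set Implicit Arguments. Unset Strict Implicit.

Record noncrossing_involution (n : nat) (p : nat -> nat) : Prop := {
  inv_lt : forall i, i < n -> p i < n;
  inv_neq : forall i, i < n -> p i <> i;
  invK : forall i, i < n -> p (p i) = i;
  inv_noncrossing : forall a c b d, a < c -> c < b -> b < d -> d < n ->
    p a = b -> p c = d -> False }.
Arguments inv_lt {n p} _ {i}. Arguments inv_neq {n p} _ {i}.
Arguments invK {n p} _ {i}. Arguments inv_noncrossing {n p} _ {a c b d}.

Section NoncrossingInvolution.
Variables (n : nat) (p : nat -> nat).
Hypothesis Hp : noncrossing_involution n p.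

Definition stable x y := forall c, x <= c -> c < y -> x <= p c /\ p c < y.

Definition separated_at i :=
  (p i = i + 3 /\ p (i + 1) = i + 2) \/ (p i = i + 1 /\ p (i + 2) = i + 3).

Lemma stable_partner x y : y <= n -> x < y -> stable x y -> x < p x < y.
Proof.
move=> yn xy S; have [h1 h2] := S x (leqnn x) xy.
have := inv_neq Hp (i := x) ltac:(lia); lia.
Qed.

Lemma not_stable1 x : x < n -> ~ stable x x.+1.
Proof. by move=> xn /(stable_partner _ (ltnSn x)) /=; lia. Qed.

Lemma stable_inner x y : y <= n -> x < y -> stable x y -> stable x.+1 (p x).
Proof.
move=> yn xy S c h1 h2.
have /andP [xz zy] := stable_partner yn xy S.
have [a b] := S c (ltnW h1) (ltn_trans h2 zy).
have cn : c < n by lia.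
have e1 : p c <> x by move=> e; have := invK Hp cn; rewrite e; lia.
have e2 : p c <> p x by move=> e; have := invK Hp cn; rewrite e (invK Hp); lia.
have e3 : ~ p x < p c by move=> h; exact: (inv_noncrossing Hp h1 h2 h (inv_lt Hp cn)).
lia.
Qed.

Lemma stable_outer x y : y <= n -> x < y -> stable x y -> stable (p x).+1 y.
Proof.
move=> yn xy S c h1 h2.
have /andP [xz zy] := stable_partner yn xy S.
have [a b] := S c (ltnW (leq_ltn_trans (ltnW xz) h1)) h2.
have cn : c < n by lia.
have e1 : p c <> x by move=> e; have := invK Hp cn; rewrite e; lia.
have e2 : p c <> p x by move=> e; have := invK Hp cn; rewrite e (invK Hp); lia.
have e3 : ~ x < p c < p x.
  move=> /andP [u v]; have [u' v'] := stable_inner yn xy S u v.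
  by rewrite (invK Hp) in u' v'; lia.
lia.
Qed.

Lemma exists_separated x y : x + 3 <= y -> y <= n -> stable x y ->
  exists i, [/\ x <= i, i + 3 < y & separated_at i].
Proof.
have [m ltm] := ubnP (y - x); elim: m => // m IH in x y ltm *.
move=> h3 yn S; have xy : x < y by lia.
have /andP [xz zy] := stable_partner yn xy S.
have Sin := stable_inner yn xy S; have Sout := stable_outer yn xy S.
have [long|short] := ltnP (x + 3) (p x).
  have [i [? ? ?]] := IH x.+1 (p x) ltac:(lia) ltac:(lia) ltac:(lia) Sin.
  by exists i; split => //; lia.
have [e3|[e2|e1]] : p x = x + 3 \/ p x = x + 2 \/ p x = x + 1 by lia.
- rewrite e3 in Sin.
  have := stable_partner (x := x.+1) (y := x + 3) ltac:(lia) ltac:(lia) Sin.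
  rewrite -[x.+1]addn1 => /andP [? ?].
  by exists x; split => //; [lia | left; split; lia].
- by rewrite e2 addn2 in Sin; case: (not_stable1 (x := x.+1) ltac:(lia)).
- rewrite e1 addn1 in Sout.
  have [far|near] := ltnP (x + 4) y.
    have [i [? ? ?]] := IH x.+2 y ltac:(lia) ltac:(lia) yn Sout.
    by exists i; split => //; lia.
  have [y4|y3] : y = x + 4 \/ y = x + 3 by lia.
  + have := stable_partner (x := x.+2) yn ltac:(lia) Sout.
    rewrite -[x.+2]addn2 => /andP [? ?].
    by exists x; split => //; [lia | right; split; lia].
  + by case: (not_stable1 (x := x.+2) ltac:(lia)); rewrite (_ : x.+3 = y) //; lia.
Qed.

Lemma stable_separated i : i + 3 < n -> separated_at i -> stable i (i + 4).
Proof.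
move=> hi sep c h1 h2.
have cases : c = i \/ c = i + 1 \/ c = i + 2 \/ c = i + 3 by lia.
case: sep => [[e0 e1]|[e0 e1]].
- have e3 : p (i + 3) = i by rewrite -e0 (invK Hp) //; lia.
  have e2 : p (i + 2) = i + 1 by rewrite -e1 (invK Hp) //; lia.
  by case: cases => [->|[->|[->|->]]]; rewrite ?e0 ?e1 ?e2 ?e3; lia.
- have e1' : p (i + 1) = i by rewrite -e0 (invK Hp) //; lia.
  have e3 : p (i + 3) = i + 2 by rewrite -e1 (invK Hp) //; lia.
  by case: cases => [->|[->|[->|->]]]; rewrite ?e0 ?e1 ?e1' ?e3; lia.
Qed.

Lemma stable_complement y : y <= n -> stable 0 y -> stable y n.
Proof.
move=> yn S c h1 h2; have cn := inv_lt Hp h2.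
split => //; rewrite leqNgt; apply/negP => lt_y.
by have [_] := S (p c) (leq0n _) lt_y; rewrite (invK Hp) //; lia.
Qed.

End NoncrossingInvolution.

Section Cyclic.
Variable n : nat.

Lemma cyc_val (R : 'I_n) x : nat_of_ord (cyc R x) = (R + x) %% n.
Proof.
by rewrite /cyc insubdK // unfold_in ltn_pmod // (leq_ltn_trans _ (ltn_ord R)).
Qed.

Lemma cyc_val_lt (R : 'I_n) x : R + x < n -> nat_of_ord (cyc R x) = R + x.
Proof. by move=> h; rewrite cyc_val modn_small. Qed.

Lemma cyc_val_ge (R : 'I_n) x : n <= R + x -> x < n -> nat_of_ord (cyc R x) = R + x - n.
Proof.
move=> h1 h2; rewrite cyc_val -{1}(subnK h1) modnDr modn_small //.
have := ltn_ord R; lia.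
Qed.

Lemma cyc0 (R : 'I_n) : cyc R 0 = R.
Proof. by apply: ord_inj; rewrite cyc_val_lt addn0. Qed.

Lemma cycD (R : 'I_n) x y : cyc (cyc R x) y = cyc R (x + y).
Proof. by apply: ord_inj; rewrite !cyc_val modnDml addnA. Qed.

Lemma cyc_inj (R : 'I_n) x y : x < n -> y < n -> cyc R x = cyc R y -> x = y.
Proof.
move=> xn yn /(congr1 (@nat_of_ord n)); rewrite !cyc_val => /eqP.
by rewrite eqn_modDl !modn_small // => /eqP.
Qed.

Lemma edgeC (a b : 'I_n) : edge a b = edge b a.
Proof. exact: setUC. Qed.

Lemma interleaved_crossing (a b c d : 'I_n) :
  a < c -> c < b -> b < d -> crossing (edge a b) (edge c d).
Proof. by move=> *; exists a, b, c, d. Qed.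

(* Shifting the start point rotates the cyclic order, so two interleaving
   chords still interleave, with one of four points now read first. *)
Lemma crossing_cyc (R : 'I_n) a c b d : a < c -> c < b -> b < d -> d < n ->
  crossing (edge (cyc R a) (cyc R b)) (edge (cyc R c) (cyc R d)) \/
  crossing (edge (cyc R c) (cyc R d)) (edge (cyc R a) (cyc R b)).
Proof.
move=> ac cb bd dn; have hR := ltn_ord R.
case: (ltnP (R + d) n) => wd.
  by left; apply: interleaved_crossing; rewrite !cyc_val_lt; lia.
case: (ltnP (R + b) n) => wb.
  right; rewrite [edge (cyc R c) _]edgeC; apply: interleaved_crossing;
  by rewrite ?(cyc_val_ge wd) // ?cyc_val_lt; lia.
case: (ltnP (R + c) n) => wc.
  left; rewrite [edge (cyc R a) _]edgeC [edge (cyc R c) _]edgeC;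
  apply: interleaved_crossing;
  by rewrite ?(cyc_val_ge wd) ?(cyc_val_ge wb) ?cyc_val_lt //; lia.
case: (ltnP (R + a) n) => wa.
  right; rewrite [edge (cyc R a) _]edgeC; apply: interleaved_crossing;
  by rewrite ?(cyc_val_ge wd) ?(cyc_val_ge wb) ?(cyc_val_ge wc) ?cyc_val_lt //; lia.
by left; apply: interleaved_crossing; rewrite !cyc_val_ge //; lia.
Qed.

End Cyclic.

Section Matching.
Variables (n : nat) (M : {set {set 'I_n}}).
Hypothesis HM : is_matching M.

Definition partner (x : 'I_n) : 'I_n := odflt x [pick y | edge x y \in M].

Lemma partner_edge x : edge x (partner x) \in M.
Proof.
case: HM => Hc Hu _; have [e [[eM xe] _]] := Hu x.
have /cards2P [a [b [_ ee]]] : #|e| == 2 by rewrite Hc.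
have [y yM] : exists y, edge x y \in M.
  move: xe; rewrite ee => /set2P [->|->]; first by exists b; rewrite /edge -ee.
  by exists a; rewrite edgeC /edge -ee.
by rewrite /partner; case: pickP => [//|/(_ y)]; rewrite yM.
Qed.

Lemma partner_neq x : partner x != x.
Proof.
apply/eqP => e; case: HM => Hc _ _.
by have := Hc _ (partner_edge x); rewrite e /edge setUid cards1.
Qed.

Lemma partnerK : involutive partner.
Proof.
move=> x; case: HM => _ Hu _; have [e [_ U]] := Hu (partner x).
have E1 := U _ (conj (partner_edge x) (set22 _ _)).
have E2 := U _ (conj (partner_edge (partner x)) (set21 _ _)).
have : partner (partner x) \in edge x (partner x) by rewrite -E1 E2 set22.
case/set2P => [//|e']; by have := partner_neq (partner x); rewrite e' eqxx.
Qed.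

(* [partner] in the coordinates [x |-> cyc R x] that start reading at [R]. *)
Definition rot_partner (R : 'I_n) (x : nat) : nat :=
  (partner (cyc R x) + (n - R)) %% n.

Lemma rot_partner_lt R x : rot_partner R x < n.
Proof. by rewrite ltn_pmod // (leq_ltn_trans _ (ltn_ord R)). Qed.

Lemma cyc_rot_partner R x : cyc R (rot_partner R x) = partner (cyc R x).
Proof.
apply: ord_inj; rewrite cyc_val modnDmr.
have hR := ltn_ord R; have hz := ltn_ord (partner (cyc R x)).
by rewrite (_ : R + _ = partner (cyc R x) + n) ?modnDr ?modn_small //; lia.
Qed.

Lemma rot_partnerP R x y : x < n -> y < n ->
  rot_partner R x = y <-> partner (cyc R x) = cyc R y.
Proof.
move=> xn yn; rewrite -cyc_rot_partner.
by split=> [->//|]; apply: cyc_inj => //; exact: rot_partner_lt.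
Qed.

Lemma rot_partner_nc R : noncrossing_involution n (rot_partner R).
Proof.
split=> [i _|i hi|i hi|a c b d ac cb bd dn].
- exact: rot_partner_lt.
- by move/rot_partnerP => /(_ hi hi) e; have := partner_neq (cyc R i); rewrite e eqxx.
- apply/rot_partnerP => //; first exact: rot_partner_lt.
  by rewrite cyc_rot_partner partnerK.
- move=> /rot_partnerP eab /rot_partnerP ecd.
  have eM u v : partner (cyc R u) = cyc R v -> edge (cyc R u) (cyc R v) \in M.
    by move=> <-; exact: partner_edge.
  have Mab := eM _ _ (eab ltac:(lia) ltac:(lia)).
  have Mcd := eM _ _ (ecd ltac:(lia) ltac:(lia)).
  case: HM => _ _ Hnc.
  by case: (crossing_cyc R ac cb bd dn); [exact: Hnc | exact: Hnc].
Qed.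

Lemma rot_partner_shift R i x y : i + x < n -> i + y < n ->
  rot_partner R (i + x) = i + y -> rot_partner (cyc R i) x = y.
Proof.
move=> hx hy /(rot_partnerP R hx hy) e.
by apply/(rot_partnerP (cyc R i)); rewrite ?cycD //; lia.
Qed.

Lemma separated_shift R i : i + 3 < n -> separated_at (rot_partner R) i ->
  separated_at (rot_partner (cyc R i)) 0.
Proof.
move=> hi [[e0 e1]|[e0 e1]]; [left|right]; split; apply: rot_partner_shift;
  by rewrite ?addn0 //; lia.
Qed.

End Matching.

Section SeparatedPairs.
Variables (n : nat) (M : {set {set 'I_n}}).
Hypothesis HM : is_matching M.

Lemma separated_pair_sub S : is_separated_pair M S -> S \subset M.
Proof. by case=> -[i [_ sub]]. Qed.

Lemma separated_pair_at (I : 'I_n) : 3 < n -> separated_at (rot_partner M I) 0 ->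
  exists2 S, is_separated_pair M S &
    forall e x, e \in S -> x \in e -> exists2 a, a < 4 & x = cyc I a.
Proof.
move=> n3 sep.
have inM u v : u < n -> v < n -> rot_partner M I u = v -> edge (cyc I u) (cyc I v) \in M.
  by move=> un vn /rot_partnerP -/(_ un vn) <-; exact: partner_edge.
have win a b c d : a < 4 -> b < 4 -> c < 4 -> d < 4 -> forall e x,
    e \in [set edge (cyc I a) (cyc I b); edge (cyc I c) (cyc I d)] -> x \in e ->
    exists2 a, a < 4 & x = cyc I a.
  move=> ha hb hc hd e x /set2P [->|->] /set2P [->|->];
  by [exists a | exists b | exists c | exists d].
case: sep => [[e0 e1]|[e0 e1]].
- exists [set edge I (cyc I 3); edge (cyc I 1) (cyc I 2)];
    last by rewrite -{1}(cyc0 I); exact: win.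
  left; exists I; split => //; apply/subsetP => e /set2P [->|->].
    by rewrite -{1}(cyc0 I); apply: inM => //; lia.
  by apply: inM => //; lia.
- exists [set edge I (cyc I 1); edge (cyc I 2) (cyc I 3)];
    last by rewrite -{1}(cyc0 I); exact: win.
  right; exists I; split => //; apply/subsetP => e /set2P [->|->].
    by rewrite -{1}(cyc0 I); apply: inM => //; lia.
  by apply: inM => //; lia.
Qed.

Lemma two_disjoint_separated_pairs : 8 <= n ->
  exists S1 S2 : {set {set 'I_n}},
    [/\ is_separated_pair M S1, is_separated_pair M S2 & S1 :&: S2 = set0].
Proof.
move=> n8; pose R0 : 'I_n := Ordinal (leq_trans (isT : 0 < 8) n8).
have whole : stable (rot_partner M R0) 0 n.
  by move=> c _ cn; split=> //; exact: rot_partner_lt.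
have [i [_ hi si]] :=
  exists_separated (rot_partner_nc HM R0) (x := 0) (y := n) ltac:(lia) (leqnn n) whole.
move: (cyc R0 i) (separated_shift hi si) => R s0.
have Hp := rot_partner_nc HM R.
have first := stable_separated Hp (i := 0) ltac:(lia) s0.
have rest := stable_complement Hp (y := 4) ltac:(lia) first.
have [j [j4 jn sj]] := exists_separated Hp (x := 4) (y := n) ltac:(lia) (leqnn n) rest.
have [S1 P1 W1] := separated_pair_at ltac:(lia) s0.
have [S2 P2 W2] := separated_pair_at ltac:(lia) (separated_shift jn sj).
exists S1, S2; split => //; apply/setP => e; rewrite inE in_set0.
apply/negP => /andP [e1 e2].
have /card_gt0P [x xe] : 0 < #|e|.
  by case: HM => Hc _ _; rewrite Hc // (subsetP (separated_pair_sub P1)).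
have [a a4 xa] := W1 _ _ e1 xe; have [b b4 xb] := W2 _ _ e2 xe.
rewrite xa cycD in xb.
by have := cyc_inj (R := R) (x := a) (y := j + b) ltac:(lia) ltac:(lia) xb; lia.
Qed.

End SeparatedPairs.

Theorem mainTheorem6 (k : nat) (hk : (4 <= k)%N) (M : {set {set 'I_(k.*2)}}) :
  is_matching M ->
  exists S1 S2 : {set {set 'I_(k.*2)}},
    [/\ is_separated_pair M S1, is_separated_pair M S2 & S1 :&: S2 = set0].
Proof. by move=> HM; apply: two_disjoint_separated_pairs => //; rewrite -addnn; lia. Qed.
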